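(* Let $\Gamma_H$ be the H-junction tree with edges $e_1,\dots,e_5$ of propagation times $t_1,\dots,t_5$, where the interior vertices are $A$ (incident to $e_1,e_2,e_3$) and $B$ (incident to $e_3,e_4,e_5$), and let $\Gamma'_H$ be obtained from $\Gamma_H$ by permuting the edges $e_1$ and $e_5$ (so in $\Gamma'_H$ the vertex $A$ is incident to $e_5,e_2,e_3$ and $B$ to $e_3,e_4,e_1$). If $(t_1,\dots,t_5)$ satisfies Assumption 1, then as $T\to\infty$ $$N(\Gamma_H, A, T) - N(\Gamma'_H, A, T) = -\frac{1}{96\, t_2t_4}\left(\frac{1}{t_5} - \frac{1}{t_1}\right) T^3 + o(T^3).$$
   Context: An H-junction has six vertices: two interior vertices of valence $3$ joined by one edge (here $e_3$, the ''jumper''), and four valence-one vertices, each joined to one of the interior vertices by one of the remaining four edges (two per interior vertex). Dynamics: each edge $e_i$ is traversed in time $t_i$; at time $0$ the process starts at $A$ (a point departs from $A$ along each incident edge); at a valence-one vertex a point is reflected; if $k$ points arrive simultaneously at an interior vertex of valence $v$, then $v$ points leave it, one along each incident edge. $N(\Gamma,A,T)$ is the total number of points moving on the graph $\Gamma$ at time $T$ when the process starts at vertex $A$. Assumption 1: $t_1,\dots,t_5$ are linearly independent over $\mathbb{Q}$, and for every $1\le m\le 4$ and every $m$-element subset $\{s_{i_1},\dots,s_{i_m}\}\subset\{t_1,\dots,t_5\}$ the number of tuples of nonnegative integers with $s_{i_1}n_{i_1}+\dots+s_{i_m}n_{i_m}\le T$ equals $P_m(s_{i_1},\dots,s_{i_m})T^4+R_m(s_{i_1},\dots,s_{i_m})T^3+o(T^3)$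 as $T\to\infty$, for some coefficients $P_m,R_m$. *)

From Stdlib Require Import Reals List QArith Qreals ClassicalEpsilon.
Import ListNotations.
Open Scope R_scope.

(** Cardinality of a finite set given by a predicate: the length of a
    duplicate-free list enumerating it (all such lists have the same length);
    0 if the set is not finite (never happens in the uses below). *)
Definition fin_card {X : Type} (P : X -> Prop) : nat :=
  match excluded_middle_informative
          (exists l : list X, NoDup l /\ forall x, In x l <-> P x) with
  | left h => length (proj1_sig (constructive_indefinite_description _ h))
  | right _ => 0%nat
  end.

Section Process.
Variables (V E : Type) (ends : E -> V * V) (len : E -> R).

Definition incident (v : V) (e : E) : Prop := fst (ends e) = v \/ snd (ends e) = v.

Definition joins (e : E) (v w : V) : Prop := ends e = (v, w) \/ ends e = (w, v).

(** [departs a v s e] : in the process started at vertex [a], a point leaves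
    vertex [v] at time [s] along the edge [e].  A point leaving [v] at time [s] along [e]
    arrives at the other end [w] of [e] at time [s + len e]; then one point
    leaves [w] along each edge incident to [w] (for a valence-one vertex this
    is the reflection along the same edge; for an interior vertex, any number
    of points arriving simultaneously produce exactly one point per incident
    edge, since departures are recorded as a set). *)
Inductive departs (a : V) : V -> R -> E -> Prop :=
| dep_start : forall e, incident a e -> departs a a 0 e
| dep_next : forall v s e w e',
    departs a v s e -> joins e v w -> incident w e' ->
    departs a w (s + len e) e'.

Definition Npoints (a : V) (T : R) : nat :=
  fin_card (fun x : V * R * E =>
    match x with (v, s, e) => departs a v s e /\ s <= T < s + len e end).
End Process.

Inductive hvert := vA | vB | vL1 | vL2 | vL4 | vL5.
Inductive hedge := e1 | e2 | e3 | e4 | e5.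

Definition endsH (e : hedge) : hvert * hvert :=
  match e with
  | e1 => (vA, vL1) | e2 => (vA, vL2) | e3 => (vA, vB)
  | e4 => (vB, vL4) | e5 => (vB, vL5)
  end.

Definition endsH' (e : hedge) : hvert * hvert :=
  match e with
  | e1 => (vB, vL1) | e2 => (vA, vL2) | e3 => (vA, vB)
  | e4 => (vB, vL4) | e5 => (vA, vL5)
  end.

Definition tlen (t1 t2 t3 t4 t5 : R) (e : hedge) : R :=
  match e with e1 => t1 | e2 => t2 | e3 => t3 | e4 => t4 | e5 => t5 end.

Fixpoint lin_comb (s : list R) (n : list nat) : R :=
  match s, n with
  | x :: s', k :: n' => x * INR k + lin_comb s' n'
  | _, _ => 0
  end.

Definition lattice_count (s : list R) (T : R) : nat :=
  fin_card (fun n : list nat => length n = length s /\ lin_comb s n <= T).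

Definition asymp_4_3 (f : R -> R) (P Rc : R) : Prop :=
  forall eps, 0 < eps -> exists T0, forall T, T0 <= T ->
    Rabs (f T - (P * T ^ 4 + Rc * T ^ 3)) <= eps * T ^ 3.

Definition asymp_3 (f : R -> R) (c : R) : Prop :=
  forall eps, 0 < eps -> exists T0, forall T, T0 <= T ->
    Rabs (f T - c * T ^ 3) <= eps * T ^ 3.

Definition Assumption1 (t1 t2 t3 t4 t5 : R) : Prop :=
  (forall q1 q2 q3 q4 q5 : Q,
      (Q2R q1 * t1 + Q2R q2 * t2 + Q2R q3 * t3 + Q2R q4 * t4 + Q2R q5 * t5 = 0)%R ->
      (q1 == 0 /\ q2 == 0 /\ q3 == 0 /\ q4 == 0 /\ q5 == 0)%Q)
  /\
  (* every m-element subset (1 <= m <= 4) of {t1,...,t5}, given by a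
     duplicate-free list of indices in {0,...,4} *)
  (forall idx : list nat, NoDup idx -> (1 <= length idx <= 4)%nat ->
      (forall i, In i idx -> (i < 5)%nat) ->
      exists P Rc : R,
        asymp_4_3 (fun T => INR (lattice_count
                     (map (fun i => nth i [t1; t2; t3; t4; t5] 0) idx) T)) P Rc).

(* In Gamma_H a point leaves v along e at time s exactly when e is incident to v and
   s = c1 t1 + ... + c5 t5 for the edge-traversal vector c of some walk from A to v:
   simultaneous arrivals merge, so departures correspond to these times, and distinct
   vectors give distinct times by the rational independence of the t_i.  The traversal
   vectors of walks ending at a vertex form explicit parity classes, so the points moving
   on an edge at time T are counted by lattice-point counts N_s(Y) = #{n | s . n <= Y}
   over lists s of doubled lengths, the coordinate of the edge itself being pinned down
   by the window (T - t_e, T].  Gamma'_H is Gamma_H with t1 and t5 exchanged, and in the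
   difference of the two counts most terms cancel.  The two four-dimensional survivors
   combine, through N_{2t3 :: r}(Y) = N_r(Y) + N_{2t3 :: r}(Y - 2t3), into second
   differences, which are o(T^3) by Assumption 1, and three-dimensional counts
   ~ T^3 / (3! prod r), which produce the T^3 term; everything else is O(T^2). *)

From Stdlib Require Import Reals Lra Lia List QArith Qreals ZArith ZifyNat Permutation
  FunctionalExtensionality PropExtensionality Classical ClassicalEpsilon.
Import ListNotations.
Open Scope R_scope.

Ltac plia := zify; Z.to_euclidean_division_equations; lia.

(** * Finite cardinalities *)

Definition has_card {X : Type} (P : X -> Prop) (n : nat) : Prop :=
  exists l, NoDup l /\ (forall x, In x l <-> P x) /\ length l = n.

Lemma fin_card_has_card {X : Type} (P : X -> Prop) n : has_card P n -> fin_card P = n.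
Proof.
  intros [l [Hnd [Hin <-]]]. unfold fin_card.
  destruct excluded_middle_informative as [h|h]; [|exfalso; eauto].
  destruct (constructive_indefinite_description _ h) as [l' [Hnd' Hin']]; simpl.
  apply Nat.le_antisymm; apply NoDup_incl_length; auto; intros x Hx.
  - apply Hin, Hin', Hx.
  - apply Hin', Hin, Hx.
Qed.

Lemma has_card_unique {X : Type} (P : X -> Prop) n m : has_card P n -> has_card P m -> n = m.
Proof. intros Hn Hm. now rewrite <- (fin_card_has_card _ _ Hn), (fin_card_has_card _ _ Hm). Qed.

Lemma fin_card_ext {X : Type} (P Q : X -> Prop) : (forall x, P x <-> Q x) -> fin_card P = fin_card Q.
Proof.
  intros H. replace Q with P; auto.
  apply functional_extensionality; intros x; apply propositional_extensionality, H.
Qed.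

Lemma has_card_ext {X : Type} (P Q : X -> Prop) n :
  (forall x, P x <-> Q x) -> has_card P n -> has_card Q n.
Proof.
  intros H [l [Hnd [Hin Hlen]]]. exists l; repeat split; auto; intros Hx.
  - apply H, Hin, Hx.
  - apply Hin, H, Hx.
Qed.

Section Bijection.
Variables (A B : Type) (P : A -> Prop) (Q : B -> Prop) (f : A -> B).
Hypotheses (f_maps : forall x, P x -> Q (f x))
  (f_inj : forall x y, P x -> P y -> f x = f y -> x = y)
  (f_onto : forall y, Q y -> exists x, P x /\ f x = y).

Lemma has_card_image n : has_card P n -> has_card Q n.
Proof.
  intros [l [Hnd [Hin Hlen]]]. exists (map f l). repeat split.
  - apply NoDup_map_NoDup_ForallPairs; auto.
    intros x y Hx Hy; apply f_inj; apply Hin; auto.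
  - intros Hm. apply in_map_iff in Hm as [a [<- Ha]]. apply f_maps, Hin, Ha.
  - intros Hy. destruct (f_onto _ Hy) as [a [Ha <-]]. apply in_map, Hin, Ha.
  - now rewrite length_map.
Qed.

Lemma list_preimage l : (forall y, In y l -> Q y) ->
  exists l', map f l' = l /\ forall x, In x l' -> P x.
Proof.
  induction l as [|y l IH]; intros Hl.
  - exists []; split; [reflexivity|intros x []].
  - destruct IH as [l' [<- HP]]; [intros; apply Hl; now right|].
    destruct (f_onto y) as [x [Hx <-]]; [apply Hl; now left|].
    exists (x :: l'); split; [reflexivity|]. intros z [<-|Hz]; auto.
Qed.

Lemma has_card_preimage n : has_card Q n -> has_card P n.
Proof.
  intros [l [Hnd [Hin Hlen]]].
  destruct (list_preimage l) as [l' [<- HP]]; [intros; apply Hin; auto|].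
  exists l'. repeat split.
  - eapply NoDup_map_inv; eauto.
  - apply HP.
  - intros Hx. assert (Hm : In (f x) (map f l')) by (apply Hin, f_maps, Hx).
    apply in_map_iff in Hm as [y [Ey Hy]].
    now rewrite <- (f_inj y x (HP y Hy) Hx Ey).
  - now rewrite length_map in Hlen.
Qed.

End Bijection.

Arguments has_card_image {A B} P Q f _ _ _ n _.
Arguments has_card_preimage {A B} P Q f _ _ _ n _.

Lemma has_card_or {X : Type} (P Q : X -> Prop) n m :
  has_card P n -> has_card Q m -> (forall x, P x -> Q x -> False) ->
  has_card (fun x => P x \/ Q x) (n + m).
Proof.
  intros [l1 [N1 [I1 L1]]] [l2 [N2 [I2 L2]]] Hd. exists (l1 ++ l2). repeat split.
  - apply NoDup_app; auto. intros x Hx1 Hx2. apply (Hd x); [apply I1|apply I2]; auto.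
  - intros Hx. apply in_app_or in Hx as [Hx|Hx]; [left; apply I1|right; apply I2]; auto.
  - intros [Hx|Hx]; apply in_or_app; [left; apply I1|right; apply I2]; auto.
  - rewrite length_app; lia.
Qed.

Lemma has_card_split {X : Type} (P Q R : X -> Prop) n m :
  has_card P n -> has_card Q m -> (forall x, P x -> Q x -> False) ->
  (forall x, R x <-> P x \/ Q x) -> has_card R (n + m).
Proof.
  intros Hn Hm Hd HR. eapply has_card_ext; [intros x; symmetry; apply HR|].
  now apply has_card_or.
Qed.

Lemma has_card_empty {X : Type} (P : X -> Prop) : (forall x, ~ P x) -> has_card P 0.
Proof. intros H. exists []; repeat split; [constructor|intros []|intros Hx; exact (H _ Hx)]. Qed.

Lemma has_card_single {X : Type} (P : X -> Prop) a : (forall x, P x <-> x = a) -> has_card P 1.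
Proof.
  intros H. exists [a]; repeat split.
  - repeat constructor; intros [].
  - intros [<-|[]]; apply H; auto.
  - intros Hx; left; symmetry; apply H, Hx.
Qed.

(** * Lattice-point counts *)

Definition lattice_point (s : list R) (Y : R) (n : list nat) : Prop :=
  length n = length s /\ lin_comb s n <= Y.

Definition all_pos (s : list R) : Prop := Forall (fun x => 0 < x) s.

Lemma lin_comb_nonneg s n : all_pos s -> 0 <= lin_comb s n.
Proof.
  revert n; induction s as [|x s IH]; intros [|k n] Hs; simpl; try lra.
  inversion Hs; subst. specialize (IH n ltac:(assumption)). pose proof (pos_INR k). nra.
Qed.

Lemma R_shift_ind (x : R) (P : R -> Prop) : 0 < x ->
  (forall Y, Y < 0 -> P Y) -> (forall Y, 0 <= Y -> P (Y - x) -> P Y) -> forall Y, P Y.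
Proof.
  intros Hx Hneg Hstep.
  assert (Hn : forall n Y, Y < INR n * x -> P Y).
  { induction n as [|n IH]; intros Y HY.
    - apply Hneg. simpl in HY; lra.
    - destruct (Rlt_dec Y 0); [apply Hneg; auto|].
      apply Hstep; [lra|]. apply IH. rewrite S_INR in HY; lra. }
  intros Y. destruct (INR_archimed x Y Hx) as [n Hlt]. eapply Hn; eauto.
Qed.

Lemma lattice_point_cons x r Y n : 0 < x ->
  lattice_point (x :: r) Y n <->
  (exists n', n = 0%nat :: n' /\ lattice_point r Y n') \/
  (exists k n', n = S k :: n' /\ lattice_point (x :: r) (Y - x) (k :: n')).
Proof.
  intros Hx; unfold lattice_point; cbn [lin_comb length]; split.
  - intros [Hl Hc]. destruct n as [|[|k] n']; cbn [lin_comb length] in *; try discriminate.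
    + left; exists n'; split; auto. cbn [INR] in Hc. split; [lia|lra].
    + right; exists k, n'; split; auto. cbn [lin_comb length]. rewrite S_INR in Hc. split; [lia|lra].
  - intros [[n' [-> [Hl Hc]]]|[k [n' [-> [Hl Hc]]]]]; cbn [lin_comb length] in *.
    + simpl INR. split; [lia|lra].
    + rewrite S_INR. split; [lia|lra].
Qed.

Lemma has_card_lattice_point_cons x r Y m k : 0 < x ->
  has_card (lattice_point r Y) m -> has_card (lattice_point (x :: r) (Y - x)) k ->
  has_card (lattice_point (x :: r) Y) (m + k).
Proof.
  intros Hx Hm Hk. eapply has_card_split.
  - apply (has_card_image (lattice_point r Y)
      (fun n => exists n', n = 0%nat :: n' /\ lattice_point r Y n') (cons 0%nat)); eauto.
    + intros a b _ _ E; now inversion E.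
    + intros n [n' [-> H]]; eauto.
  - apply (has_card_image (lattice_point (x :: r) (Y - x))
      (fun n => exists j n', n = S j :: n' /\ lattice_point (x :: r) (Y - x) (j :: n'))
      (fun n => match n with [] => [] | j :: n' => S j :: n' end)); auto.
    + intros [|j n'] Hn; [now destruct Hn|]. exists j, n'; auto.
    + intros [|a l] [|b l'] [Ha _] [Hb _] E; try discriminate. now inversion E.
    + intros n [j [n' [-> H]]]; exists (j :: n'); auto.
  - intros n [n' [-> _]] [j [n'' [E _]]]; discriminate.
  - intros n. now apply lattice_point_cons.
Qed.

Lemma lattice_point_card s Y : all_pos s -> has_card (lattice_point s Y) (lattice_count s Y).
Proof.
  intros Hs. enough (exists m, has_card (lattice_point s Y) m) as [m Hm].
  { unfold lattice_count. fold (lattice_point s Y). now rewrite (fin_card_has_card _ _ Hm). }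
  revert Y; induction s as [|x r IH]; intros Y.
  - destruct (Rlt_dec Y 0) as [HY|HY%Rnot_lt_le].
    + exists 0%nat; apply has_card_empty. intros l [_ H]; destruct l; simpl in H; lra.
    + exists 1%nat; apply (has_card_single _ []). intros [|k l]; unfold lattice_point; simpl.
      * split; auto; lra.
      * split; [intros [H _]; discriminate|discriminate].
  - inversion Hs; subst. pattern Y; apply (R_shift_ind x); auto.
    + intros Z HZ. exists 0%nat; apply has_card_empty. intros l [_ H].
      pose proof (lin_comb_nonneg _ l Hs); lra.
    + intros Z _ [k Hk]. destruct (IH ltac:(assumption) Z) as [m Hm].
      exists (m + k)%nat. now apply has_card_lattice_point_cons.
Qed.

Lemma lattice_count_neg s Y : all_pos s -> Y < 0 -> lattice_count s Y = 0%nat.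
Proof.
  intros Hs HY. eapply has_card_unique; [apply lattice_point_card; auto|].
  apply has_card_empty. intros n [_ H]. pose proof (lin_comb_nonneg s n Hs); lra.
Qed.

Lemma lattice_count_nil Y : 0 <= Y -> lattice_count [] Y = 1%nat.
Proof.
  intros HY. eapply has_card_unique; [apply lattice_point_card; constructor|].
  apply (has_card_single _ []). intros [|k n]; unfold lattice_point; simpl.
  - split; auto; lra.
  - split; [intros [H _]; discriminate|discriminate].
Qed.

Lemma lattice_count_cons x r Y : all_pos (x :: r) ->
  lattice_count (x :: r) Y = (lattice_count r Y + lattice_count (x :: r) (Y - x))%nat.
Proof.
  intros Hs. inversion Hs; subst.
  eapply has_card_unique; [apply lattice_point_card; auto|].
  apply has_card_lattice_point_cons; auto; apply lattice_point_card; auto.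
Qed.

Lemma lattice_count_swap x y r Y : all_pos (x :: y :: r) ->
  lattice_count (x :: y :: r) Y = lattice_count (y :: x :: r) Y.
Proof.
  intros Hs. eapply has_card_unique; [apply lattice_point_card; auto|].
  set (swap := fun n : list nat => match n with a :: b :: n' => b :: a :: n' | _ => n end).
  apply (has_card_image (lattice_point (y :: x :: r) Y) _ swap).
  - intros [|a [|b n']] [Hl Hc]; try discriminate.
    split; [simpl in *; lia|]. cbn [swap lin_comb] in *; lra.
  - intros [|a [|b n']] [|a' [|b' n'']] [Hl _] [Hl' _] E; try discriminate.
    now inversion E.
  - intros [|a [|b n']] [Hl Hc]; try discriminate.
    exists (b :: a :: n'). split; [|reflexivity]. split; [simpl in *; lia|]. cbn [lin_comb] in *; lra.
  - apply lattice_point_card. inversion Hs as [|? ? ? Hyr]; inversion Hyr; repeat constructor; auto.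
Qed.

Lemma lattice_count_perm s s' : Permutation s s' -> all_pos s ->
  forall Y, lattice_count s Y = lattice_count s' Y.
Proof.
  intros P. induction P as [|x l l' P IH|x y l|l l' l'' P1 IH1 P2 IH2]; intros Hs Y; auto.
  - inversion Hs as [|? ? Hx Hl]; subst.
    assert (Hs' : all_pos (x :: l')) by (constructor; auto; eapply Permutation_Forall; eauto).
    pattern Y; apply (R_shift_ind x); auto.
    + intros Z HZ. now rewrite !lattice_count_neg.
    + intros Z _ IHZ. now rewrite (lattice_count_cons x l), (lattice_count_cons x l'), IH, IHZ.
  - apply lattice_count_swap, Hs.
  - rewrite IH1; auto. apply IH2. eapply Permutation_Forall; eauto.
Qed.

Lemma lin_comb_scale c s n : lin_comb (map (fun a => c * a) s) n = c * lin_comb s n.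
Proof.
  revert n; induction s as [|x s IH]; intros [|k n]; cbn [map lin_comb]; try ring.
  rewrite IH; ring.
Qed.

Lemma lattice_count_scale c s Y : 0 < c ->
  lattice_count (map (fun a => c * a) s) Y = lattice_count s (Y / c).
Proof.
  intros Hc. unfold lattice_count. apply fin_card_ext. intros n.
  rewrite length_map, lin_comb_scale.
  assert (HY : Y / c * c = Y) by (field; lra).
  split; intros [H1 H2]; split; auto; nra.
Qed.

(** * Asymptotics of lattice-point counts *)

Definition sumR (s : list R) : R := fold_right Rplus 0 s.
Definition prodR (s : list R) : R := fold_right Rmult 1 s.

(* [T ^ length s / simplex_denom s] is the volume of the simplex [{y >= 0 | s . y <= T}]. *)
Definition simplex_denom (s : list R) : R := INR (fact (length s)) * prodR s.

Lemma sumR_nonneg s : all_pos s -> 0 <= sumR s.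
Proof. induction 1; simpl; lra. Qed.

Lemma simplex_denom_pos s : all_pos s -> 0 < simplex_denom s.
Proof.
  intros Hs. apply Rmult_lt_0_compat; [apply lt_0_INR, lt_O_fact|].
  induction Hs; simpl; [lra|]. now apply Rmult_lt_0_compat.
Qed.

Lemma simplex_denom_cons x r :
  simplex_denom (x :: r) = INR (S (length r)) * x * simplex_denom r.
Proof.
  unfold simplex_denom. cbn [length prodR fold_right].
  change (fact (S (length r))) with (S (length r) * fact (length r))%nat.
  rewrite mult_INR. fold (prodR r). ring.
Qed.

Lemma pow_succ_diff_le m a Y : 0 <= a <= Y -> Y ^ S m - (Y - a) ^ S m <= INR (S m) * a * Y ^ m.
Proof.
  intros Ha. induction m as [|m IH]; [simpl; lra|].
  assert ((Y - a) ^ S m <= Y ^ S m) by (apply pow_incr; lra).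
  assert (0 <= Y ^ m) by (apply pow_le; lra).
  rewrite !S_INR in *. cbn [pow] in *.
  pose proof (Rmult_le_compat_l Y _ _ ltac:(lra) IH). nra.
Qed.

Lemma pow_succ_diff_ge m Z x : 0 <= Z -> 0 <= x -> INR (S m) * x * Z ^ m <= (Z + x) ^ S m - Z ^ S m.
Proof.
  intros HZ Hx. induction m as [|m IH]; [simpl; lra|].
  assert (0 <= Z ^ m) by (apply pow_le; lra).
  pose proof (pos_INR m).
  rewrite !S_INR in *. cbn [pow] in *.
  pose proof (Rmult_le_compat_l (Z + x) _ _ ltac:(lra) IH).
  assert (0 <= (INR m + 1) * (x * x) * Z ^ m) by (apply Rmult_le_pos; nra).
  nra.
Qed.

Lemma lattice_count_lower s Y : all_pos s -> 0 <= Y ->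
  Y ^ length s <= simplex_denom s * INR (lattice_count s Y).
Proof.
  revert Y. induction s as [|x r IH]; intros Y Hs HY.
  { rewrite lattice_count_nil; auto. unfold simplex_denom; simpl; lra. }
  inversion Hs as [|? ? Hx Hr]; subst.
  revert HY. pattern Y; apply (R_shift_ind x); auto; [intros; lra|].
  intros Z HZ IHZ _. rewrite lattice_count_cons, plus_INR, simplex_denom_cons; auto.
  set (k := length r). cbn [length]. fold k.
  assert (Hk : 1 <= INR (S k)) by (rewrite S_INR; pose proof (pos_INR k); lra).
  assert (Hr_part : INR (S k) * x * Z ^ k <=
                    INR (S k) * x * (simplex_denom r * INR (lattice_count r Z))).
  { apply Rmult_le_compat_l; [nra|]. now apply IH. }
  assert (Hcount : 0 <= INR (lattice_count (x :: r) (Z - x))) by apply pos_INR.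
  assert (Hden : 0 < simplex_denom r) by now apply simplex_denom_pos.
  assert (0 <= Z ^ k) by (apply pow_le; lra).
  destruct (Rlt_dec Z x) as [Hlt|Hge%Rnot_lt_le].
  - assert (Z * Z ^ k <= x * Z ^ k) by (apply Rmult_le_compat_r; lra).
    assert (x * Z ^ k <= INR (S k) * (x * Z ^ k)) by (assert (0 <= x * Z ^ k) by nra; nra).
    assert (0 <= INR (S k) * x * simplex_denom r * INR (lattice_count (x :: r) (Z - x))).
    { apply Rmult_le_pos; [apply Rmult_le_pos; [apply Rmult_le_pos|]|]; lra. }
    cbn [pow]. lra.
  - specialize (IHZ ltac:(lra)). rewrite simplex_denom_cons in IHZ.
    pose proof (pow_succ_diff_le k x Z ltac:(lra)). cbn [length] in IHZ. fold k in IHZ. nra.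
Qed.

Lemma lattice_count_upper s Y : all_pos s -> 0 <= Y ->
  simplex_denom s * INR (lattice_count s Y) <= (Y + sumR s) ^ length s.
Proof.
  revert Y. induction s as [|x r IH]; intros Y Hs HY.
  { rewrite lattice_count_nil; auto. unfold simplex_denom; simpl; lra. }
  inversion Hs as [|? ? Hx Hr]; subst.
  revert HY. pattern Y; apply (R_shift_ind x); auto; [intros; lra|].
  intros Z HZ IHZ _. rewrite lattice_count_cons, plus_INR, simplex_denom_cons; auto.
  set (k := length r). cbn [length sumR fold_right]. fold k (sumR r).
  assert (Hsum := sumR_nonneg r Hr).
  assert (Hr_part : INR (S k) * x * (simplex_denom r * INR (lattice_count r Z)) <=
                    INR (S k) * x * (Z + sumR r) ^ k).
  { apply Rmult_le_compat_l; [pose proof (pos_INR (S k)); nra|]. now apply IH. }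
  assert (Hrest : INR (S k) * x * simplex_denom r * INR (lattice_count (x :: r) (Z - x)) <=
                  (Z + sumR r) ^ S k).
  { destruct (Rlt_dec Z x) as [Hlt|Hge%Rnot_lt_le].
    - rewrite (lattice_count_neg (x :: r)) by (auto; lra). simpl INR.
      rewrite Rmult_0_r. apply pow_le; lra.
    - specialize (IHZ ltac:(lra)). rewrite simplex_denom_cons in IHZ.
      cbn [length sumR fold_right] in IHZ.
      fold k (sumR r) in IHZ. now replace (Z - x + (x + sumR r)) with (Z + sumR r) in IHZ by ring. }
  pose proof (pow_succ_diff_ge k (Z + sumR r) x ltac:(lra) ltac:(lra)).
  replace (Z + (x + sumR r)) with (Z + sumR r + x) by ring. lra.
Qed.

Lemma lattice_count_asymp s a n : all_pos s -> 0 <= a -> length s = S n ->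
  exists K, 0 <= K /\ forall T, a + sumR s <= T ->
    Rabs (INR (lattice_count s (T - a)) - T ^ S n / simplex_denom s) <= K * T ^ n.
Proof.
  intros Hs Ha Hn. set (F := simplex_denom s). set (sg := sumR s).
  assert (HF : 0 < F) by now apply simplex_denom_pos.
  assert (Hsg : 0 <= sg) by now apply sumR_nonneg.
  assert (HSn := pos_INR (S n)). assert (H2n : 0 < 2 ^ n) by (apply pow_lt; lra).
  exists ((INR (S n) * a + INR (S n) * sg * 2 ^ n) / F). split.
  { apply Rmult_le_pos; [|left; now apply Rinv_0_lt_compat].
    apply Rplus_le_le_0_compat; repeat apply Rmult_le_pos; lra. }
  intros T HT. assert (HTn : 0 <= T ^ n) by (apply pow_le; lra).
  pose proof (lattice_count_lower s (T - a) Hs ltac:(lra)) as Hlo.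
  pose proof (lattice_count_upper s (T - a) Hs ltac:(lra)) as Hup.
  rewrite Hn in Hlo, Hup. fold F in Hlo, Hup. fold sg in Hup.
  pose proof (pow_succ_diff_le n a T ltac:(lra)) as L.
  assert (U1 : (T - a + sg) ^ S n <= (T + sg) ^ S n) by (apply pow_incr; lra).
  pose proof (pow_succ_diff_le n sg (T + sg) ltac:(lra)) as U2.
  replace (T + sg - sg) with T in U2 by ring.
  assert (U3 : (T + sg) ^ n <= 2 ^ n * T ^ n) by (rewrite <- Rpow_mult_distr; apply pow_incr; lra).
  assert (U4 : INR (S n) * sg * (T + sg) ^ n <= INR (S n) * sg * (2 ^ n * T ^ n))
    by (apply Rmult_le_compat_l; [apply Rmult_le_pos|]; lra).
  set (N := INR (lattice_count s (T - a))) in *.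
  replace (N - T ^ S n / F) with ((F * N - T ^ S n) / F) by (field; lra).
  replace ((INR (S n) * a + INR (S n) * sg * 2 ^ n) / F * T ^ n)
    with ((INR (S n) * a * T ^ n + INR (S n) * sg * (2 ^ n * T ^ n)) / F) by (field; lra).
  unfold Rdiv. rewrite Rabs_mult, (Rabs_right (/ F)) by (left; now apply Rinv_0_lt_compat).
  apply Rmult_le_compat_r; [left; now apply Rinv_0_lt_compat|].
  assert (0 <= INR (S n) * sg * (2 ^ n * T ^ n)) by (repeat apply Rmult_le_pos; lra).
  assert (0 <= INR (S n) * a * T ^ n) by (repeat apply Rmult_le_pos; lra).
  apply Rabs_le; lra.
Qed.

Definition little_o3 (f : R -> R) : Prop :=
  forall eps, 0 < eps -> exists U, forall T, U <= T -> Rabs (f T) <= eps * T ^ 3.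

Definition big_O2 (f : R -> R) : Prop :=
  exists K U, forall T, U <= T -> Rabs (f T) <= K * T ^ 2.

Lemma little_o3_ext f g : (forall T, f T = g T) -> little_o3 g -> little_o3 f.
Proof.
  intros E H eps Heps. destruct (H eps Heps) as [U HU].
  exists U. intros T HT. rewrite E; auto.
Qed.

Lemma little_o3_plus f g : little_o3 f -> little_o3 g -> little_o3 (fun T => f T + g T).
Proof.
  intros Hf Hg eps Heps.
  destruct (Hf (eps / 2) ltac:(lra)) as [U1 H1], (Hg (eps / 2) ltac:(lra)) as [U2 H2].
  exists (Rmax U1 U2). intros T HT.
  specialize (H1 T (Rle_trans _ _ _ (Rmax_l _ _) HT)).
  specialize (H2 T (Rle_trans _ _ _ (Rmax_r _ _) HT)).
  eapply Rle_trans; [apply Rabs_triang|]. lra.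
Qed.

Lemma little_o3_scale c f : little_o3 f -> little_o3 (fun T => c * f T).
Proof.
  intros Hf eps Heps. pose proof (Rabs_pos c) as Hc.
  destruct (Hf (eps / (Rabs c + 1))) as [U HU]; [apply Rdiv_lt_0_compat; lra|].
  exists (Rmax U 0). intros T HT. specialize (HU T (Rle_trans _ _ _ (Rmax_l _ _) HT)).
  assert (0 <= T ^ 3) by (apply pow_le; eapply Rle_trans; [apply Rmax_r|apply HT]).
  rewrite Rabs_mult. apply Rle_trans with ((Rabs c + 1) * (eps / (Rabs c + 1) * T ^ 3)).
  - apply Rmult_le_compat; auto; [apply Rabs_pos|lra].
  - right; field; lra.
Qed.

Lemma little_o3_shift a f : 0 <= a -> little_o3 f -> little_o3 (fun T => f (T - a)).
Proof.
  intros Ha Hf eps Heps. destruct (Hf eps Heps) as [U HU].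
  exists (Rmax U 0 + a). intros T HT.
  pose proof (Rmax_l U 0). pose proof (Rmax_r U 0).
  eapply Rle_trans; [apply HU; lra|].
  apply Rmult_le_compat_l; [lra|]. apply pow_incr; lra.
Qed.

Lemma little_o3_rescale c f : 0 < c -> little_o3 f -> little_o3 (fun T => f (T / c)).
Proof.
  intros Hc Hf eps Heps.
  destruct (Hf (eps * c ^ 3)) as [U HU]; [apply Rmult_lt_0_compat; auto; now apply pow_lt|].
  exists (c * U). intros T HT.
  replace (eps * T ^ 3) with (eps * c ^ 3 * (T / c) ^ 3) by (field; lra).
  apply HU. apply Rmult_le_reg_l with c; auto. field_simplify; lra.
Qed.

Lemma big_O2_little_o3 f : big_O2 f -> little_o3 f.
Proof.
  intros [K [U H]] eps Heps. exists (Rmax U (Rmax 1 (Rabs K / eps))). intros T HT.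
  pose proof (Rmax_l U (Rmax 1 (Rabs K / eps))). pose proof (Rmax_r U (Rmax 1 (Rabs K / eps))).
  pose proof (Rmax_l 1 (Rabs K / eps)). pose proof (Rmax_r 1 (Rabs K / eps)).
  assert (HKT : Rabs K <= eps * T).
  { apply Rmult_le_reg_r with (/ eps); [now apply Rinv_0_lt_compat|].
    replace (eps * T * / eps) with T by (field; lra). unfold Rdiv in *; lra. }
  assert (0 <= T ^ 2) by (apply pow_le; lra).
  eapply Rle_trans; [apply H; lra|].
  replace (eps * T ^ 3) with (eps * T * T ^ 2) by ring.
  apply Rmult_le_compat_r; auto. eapply Rle_trans; [apply Rle_abs|exact HKT].
Qed.

Lemma big_O2_quadratic a b c : big_O2 (fun T => a * T ^ 2 + b * T + c).
Proof.
  exists (Rabs a + Rabs b + Rabs c), 1. intros T HT.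
  assert (HT2 : T <= T ^ 2) by (simpl; nra).
  pose proof (Rabs_pos b). pose proof (Rabs_pos c).
  pose proof (Rabs_triang (a * T ^ 2 + b * T) c). pose proof (Rabs_triang (a * T ^ 2) (b * T)).
  rewrite Rabs_mult, (Rabs_right (T ^ 2)) in * by (apply Rle_ge, pow_le; lra).
  rewrite Rabs_mult, (Rabs_right T) in * by lra.
  assert (Rabs b * T <= Rabs b * T ^ 2) by (apply Rmult_le_compat_l; auto).
  assert (Rabs c <= Rabs c * T ^ 2)
    by (rewrite <- (Rmult_1_r (Rabs c)) at 1; apply Rmult_le_compat_l; simpl; nra).
  lra.
Qed.

Lemma second_difference_little_o3 f P Rc d : asymp_4_3 f P Rc -> 0 <= d ->
  little_o3 (fun T => f T - 2 * f (T - d) + f (T - 2 * d)).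
Proof.
  intros Hf Hd. set (e := fun T => f T - (P * T ^ 4 + Rc * T ^ 3)).
  (* the quadratic is the second difference of [P T^4 + Rc T^3] with step [d] *)
  assert (He : little_o3 e) by exact Hf.
  apply little_o3_ext with (fun T =>
    ((12 * P * d ^ 2) * T ^ 2 + (6 * Rc * d ^ 2 - 24 * P * d ^ 3) * T + (14 * P * d ^ 4 - 6 * Rc * d ^ 3))
    + (e T + ((-2) * e (T - d) + e (T - 2 * d)))).
  { intros T. unfold e. ring. }
  apply little_o3_plus; [apply big_O2_little_o3, big_O2_quadratic|].
  apply little_o3_plus; [exact He|].
  apply little_o3_plus; [apply little_o3_scale|]; apply little_o3_shift; auto; lra.
Qed.

Lemma big_O2_lattice_count_low_dim s a : all_pos s -> 0 <= a -> (1 <= length s <= 2)%nat ->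
  big_O2 (fun T => INR (lattice_count s (T - a))).
Proof.
  intros Hs Ha Hlen. destruct (length s) as [|n] eqn:Hn; [lia|].
  destruct (lattice_count_asymp s a n Hs Ha Hn) as [K [HK H]].
  pose proof (simplex_denom_pos s Hs) as HF.
  exists (K + / simplex_denom s), (Rmax (a + sumR s) 1). intros T HT.
  pose proof (Rmax_l (a + sumR s) 1). pose proof (Rmax_r (a + sumR s) 1).
  specialize (H T ltac:(lra)).
  assert (T ^ n <= T ^ 2) by (apply Rle_pow; lia || lra).
  assert (T ^ S n <= T ^ 2) by (apply Rle_pow; lia || lra).
  assert (0 <= T ^ S n) by (apply pow_le; lra).
  assert (K * T ^ n <= K * T ^ 2) by (apply Rmult_le_compat_l; auto).
  assert (T ^ S n / simplex_denom s <= / simplex_denom s * T ^ 2).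
  { unfold Rdiv. rewrite Rmult_comm. apply Rmult_le_compat_l; auto.
    left; now apply Rinv_0_lt_compat. }
  rewrite Rabs_right by (apply Rle_ge, pos_INR).
  pose proof (Rle_abs (INR (lattice_count s (T - a)) - T ^ S n / simplex_denom s)). lra.
Qed.

Lemma big_O2_lattice_count_cubic_defect s a : all_pos s -> 0 <= a -> length s = 3%nat ->
  big_O2 (fun T => INR (lattice_count s (T - a)) - T ^ 3 / simplex_denom s).
Proof.
  intros Hs Ha Hn. destruct (lattice_count_asymp s a 2 Hs Ha Hn) as [K [_ H]].
  exists K, (a + sumR s). exact H.
Qed.

Lemma little_o3_lattice_second_difference c l P Rc d : 0 < c -> all_pos l ->
  asymp_4_3 (fun Y => INR (lattice_count l Y)) P Rc -> 0 < d ->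
  little_o3 (fun T => INR (lattice_count (map (fun a => c * a) l) T)
                      - 2 * INR (lattice_count (map (fun a => c * a) l) (T - d))
                      + INR (lattice_count (map (fun a => c * a) l) (T - 2 * d))).
Proof.
  intros Hc Hl Hf Hd.
  set (f := fun u => INR (lattice_count l u)).
  apply little_o3_ext with (fun T => (fun u => f u - 2 * f (u - d / c) + f (u - 2 * (d / c))) (T / c)).
  - intros T. unfold f. rewrite !lattice_count_scale by auto.
    replace ((T - d) / c) with (T / c - d / c) by (field; lra).
    replace ((T - 2 * d) / c) with (T / c - 2 * (d / c)) by (field; lra). reflexivity.
  - apply (little_o3_rescale c (fun u => f u - 2 * f (u - d / c) + f (u - 2 * (d / c)))); auto.
    apply (second_difference_little_o3 _ P Rc); auto.
    left; apply Rdiv_lt_0_compat; auto.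
Qed.

(** * Departure times in the H-junction *)

Definition moving {V E : Type} (ends : E -> V * V) (len : E -> R) (a : V) (T : R)
    (x : V * R * E) : Prop :=
  let '(v, s, e) := x in departs V E ends len a v s e /\ s <= T < s + len e.

Lemma Npoints_moving {V E : Type} (ends : E -> V * V) (len : E -> R) a T :
  Npoints V E ends len a T = fin_card (moving ends len a T).
Proof. reflexivity. Qed.

Definition vec5 := (nat * nat * nat * nat * nat)%type.

Definition walk_time (t1 t2 t3 t4 t5 : R) (c : vec5) : R :=
  let '(c1, c2, c3, c4, c5) := c in
  INR c1 * t1 + INR c2 * t2 + INR c3 * t3 + INR c4 * t4 + INR c5 * t5.

Definition vec5_sum (c : vec5) : nat :=
  let '(c1, c2, c3, c4, c5) := c in (c1 + c2 + c3 + c4 + c5)%nat.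

Definition add_edge (e : hedge) (c : vec5) : vec5 :=
  let '(c1, c2, c3, c4, c5) := c in
  match e with
  | e1 => (S c1, c2, c3, c4, c5) | e2 => (c1, S c2, c3, c4, c5)
  | e3 => (c1, c2, S c3, c4, c5) | e4 => (c1, c2, c3, S c4, c5)
  | e5 => (c1, c2, c3, c4, S c5)
  end.

(* [walk_class v c]: [c] is the edge-traversal vector of a walk from A to v in Gamma_H.
   An edge is crossed an odd number of times iff it separates A from v, and e4, e5 can
   only be reached through the jumper e3. *)
Definition parity_class (v : hvert) : vec5 :=
  match v with
  | vA => (0, 0, 0, 0, 0) | vL1 => (1, 0, 0, 0, 0) | vL2 => (0, 1, 0, 0, 0)
  | vB => (0, 0, 1, 0, 0) | vL4 => (0, 0, 1, 1, 0) | vL5 => (0, 0, 1, 0, 1)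
  end%nat.

Definition walk_class (v : hvert) (c : vec5) : Prop :=
  let '(p1, p2, p3, p4, p5) := parity_class v in
  let '(c1, c2, c3, c4, c5) := c in
  (c1 mod 2 = p1 /\ c2 mod 2 = p2 /\ c3 mod 2 = p3 /\ c4 mod 2 = p4 /\ c5 mod 2 = p5 /\
   (0 < c4 + c5 -> 0 < c3))%nat.

Lemma walk_time_add_edge t1 t2 t3 t4 t5 e c :
  walk_time t1 t2 t3 t4 t5 (add_edge e c) = walk_time t1 t2 t3 t4 t5 c + tlen t1 t2 t3 t4 t5 e.
Proof.
  destruct c as [[[[c1 c2] c3] c4] c5]; destruct e;
    cbn [add_edge walk_time tlen]; rewrite S_INR; ring.
Qed.

Definition Q_independent (t1 t2 t3 t4 t5 : R) : Prop :=
  forall q1 q2 q3 q4 q5 : Q,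
    Q2R q1 * t1 + Q2R q2 * t2 + Q2R q3 * t3 + Q2R q4 * t4 + Q2R q5 * t5 = 0 ->
    (q1 == 0 /\ q2 == 0 /\ q3 == 0 /\ q4 == 0 /\ q5 == 0)%Q.

Lemma Q_independent_swap15 t1 t2 t3 t4 t5 :
  Q_independent t1 t2 t3 t4 t5 -> Q_independent t5 t2 t3 t4 t1.
Proof. intros H q1 q2 q3 q4 q5 E. destruct (H q5 q2 q3 q4 q1) as [? [? [? [? ?]]]]; [lra|tauto]. Qed.

Lemma walk_time_inj t1 t2 t3 t4 t5 : Q_independent t1 t2 t3 t4 t5 ->
  forall c c', walk_time t1 t2 t3 t4 t5 c = walk_time t1 t2 t3 t4 t5 c' -> c = c'.
Proof.
  intros H [[[[c1 c2] c3] c4] c5] [[[[d1 d2] d3] d4] d5] E. cbn [walk_time] in E.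
  assert (Hq : forall m n : nat, Q2R (inject_Z (Z.of_nat m - Z.of_nat n)) = INR m - INR n).
  { intros m n. unfold Q2R; simpl. rewrite minus_IZR, <- !INR_IZR_INZ. field. }
  destruct (H (inject_Z (Z.of_nat c1 - Z.of_nat d1)) (inject_Z (Z.of_nat c2 - Z.of_nat d2))
              (inject_Z (Z.of_nat c3 - Z.of_nat d3)) (inject_Z (Z.of_nat c4 - Z.of_nat d4))
              (inject_Z (Z.of_nat c5 - Z.of_nat d5))) as [E1 [E2 [E3 [E4 E5]]]].
  { rewrite !Hq. lra. }
  unfold Qeq in *; simpl in *. repeat f_equal; lia.
Qed.

Lemma walk_class_step v w e c :
  walk_class v c -> joins hvert hedge endsH e v w -> walk_class w (add_edge e c).
Proof.
  destruct c as [[[[c1 c2] c3] c4] c5]. intros HW Hj.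
  destruct e; destruct Hj as [E|E]; cbn [endsH] in E; inversion E; subst;
  cbn [walk_class parity_class add_edge] in *; plia.
Qed.

Ltac last_edge e u c' :=
  exists e, u, c'; cbn [endsH add_edge walk_class parity_class];
  split; [now (left + right)|split; [f_equal; repeat f_equal; plia|plia]].

Lemma walk_class_last_edge v c : walk_class v c -> ~ (v = vA /\ c = (0, 0, 0, 0, 0)%nat) ->
  exists e u c', joins hvert hedge endsH e u v /\ c = add_edge e c' /\ walk_class u c'.
Proof.
  destruct c as [[[[c1 c2] c3] c4] c5]. intros HW Hn.
  unfold joins; destruct v; cbn [walk_class parity_class] in HW.
  - destruct (Nat.eq_dec c1 0); [destruct (Nat.eq_dec c2 0); [destruct (Nat.eq_dec c3 0)|]|].
    + exfalso; apply Hn; split; auto. repeat f_equal; lia.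
    + last_edge e3 vB (c1, c2, pred c3, c4, c5).
    + last_edge e2 vL2 (c1, pred c2, c3, c4, c5).
    + last_edge e1 vL1 (pred c1, c2, c3, c4, c5).
  - destruct (Nat.eq_dec c4 0); [destruct (Nat.eq_dec c5 0)|].
    + last_edge e3 vA (c1, c2, pred c3, c4, c5).
    + last_edge e5 vL5 (c1, c2, c3, c4, pred c5).
    + last_edge e4 vL4 (c1, c2, c3, pred c4, c5).
  - last_edge e1 vA (pred c1, c2, c3, c4, c5).
  - last_edge e2 vA (c1, pred c2, c3, c4, c5).
  - last_edge e4 vB (c1, c2, c3, pred c4, c5).
  - last_edge e5 vB (c1, c2, c3, c4, pred c5).
Qed.

Lemma departs_H_iff t1 t2 t3 t4 t5 v s e :
  departs hvert hedge endsH (tlen t1 t2 t3 t4 t5) vA v s e <->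
  incident hvert hedge endsH v e /\ exists c, walk_class v c /\ s = walk_time t1 t2 t3 t4 t5 c.
Proof.
  split.
  - induction 1 as [e Hi|v s e w e' Hd IH Hj Hi]; split; auto.
    + exists (0, 0, 0, 0, 0)%nat. split; [cbn; plia|simpl; ring].
    + destruct IH as [_ [c [HW ->]]]. exists (add_edge e c).
      split; [eapply walk_class_step; eauto|now rewrite walk_time_add_edge].
  - intros [Hi [c [HW ->]]]. remember (vec5_sum c) as N eqn:HN. revert v c e HW Hi HN.
    induction N as [N IH] using (well_founded_induction lt_wf). intros v c e HW Hi HN.
    destruct (classic (v = vA /\ c = (0, 0, 0, 0, 0)%nat)) as [[-> ->]|Hn].
    + replace (walk_time t1 t2 t3 t4 t5 (0, 0, 0, 0, 0)%nat) with 0 by (simpl; ring).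
      now constructor.
    + destruct (walk_class_last_edge v c HW Hn) as [e0 [u [c' [Hj [-> HW']]]]].
      rewrite walk_time_add_edge. apply dep_next with u; auto.
      apply (IH (vec5_sum c')); auto.
      * subst N. destruct c' as [[[[c1 c2] c3] c4] c5]; destruct e0; simpl; lia.
      * destruct Hj as [E|E]; unfold incident; rewrite E; simpl; auto.
Qed.

(** * Counting the moving points *)

Lemma window_index_unique t T r j j' : 0 < t ->
  T - t < INR j * t + r <= T -> T - t < INR j' * t + r <= T -> j = j'.
Proof.
  intros Ht H H'.
  destruct (lt_eq_lt_dec j j') as [[Hl|He]|Hl]; auto; exfalso;
    apply le_INR in Hl; rewrite S_INR in Hl; nra.
Qed.

Lemma window_index_exists t T r : 0 < t -> r <= T -> exists j, T - t < INR j * t + r <= T.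
Proof.
  intros Ht Hr.
  assert (H : forall Y, 0 <= Y -> exists j, Y - t < INR j * t <= Y).
  { intros Y. pattern Y; apply (R_shift_ind t); auto; [intros; lra|].
    intros Z HZ IH _. destruct (Rlt_dec Z t).
    - exists 0%nat. simpl; lra.
    - destruct IH as [j Hj]; [lra|]. exists (S j). rewrite S_INR. lra. }
  destruct (H (T - r)) as [j Hj]; [lra|]. exists j; lra.
Qed.

(* A window of length [t] contains exactly one value of the coordinate [j] whose
   coefficient is [t], so only the remaining coordinates [n] are counted. *)
Lemma window_card {X : Type} (emb : nat -> list nat -> X) (proj : X -> list nat)
    (time : X -> R) (s : list R) (t off T : R) :
  0 < t -> all_pos s ->
  (forall j n, length n = length s -> proj (emb j n) = n) ->
  (forall j n, length n = length s -> time (emb j n) = INR j * t + off + lin_comb s n) ->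
  has_card (fun x => (exists j n, length n = length s /\ x = emb j n) /\ T - t < time x <= T)
    (lattice_count s (T - off)).
Proof.
  intros Ht Hs Hproj Htime.
  apply (has_card_preimage _ (lattice_point s (T - off)) proj);
    [| |intros n [Hn Hc]|now apply lattice_point_card].
  - intros x [[j [n [Hn ->]]] Hw]. rewrite Hproj, Htime in * by auto.
    split; auto. pose proof (pos_INR j). nra.
  - intros x y [[j [n [Hn ->]]] Hw] [[j' [n' [Hn' ->]]] Hw'] E.
    rewrite !Hproj in E by auto. subst n'. rewrite !Htime in * by auto.
    f_equal. apply (window_index_unique t T (off + lin_comb s n)); auto; lra.
  - destruct (window_index_exists t T (off + lin_comb s n)) as [j Hj]; auto; [lra|].
    exists (emb j n). rewrite Hproj, Htime by auto. repeat split; auto; try lra. now exists j, n.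
Qed.

Definition coord (e : hedge) (c : vec5) : nat :=
  let '(c1, c2, c3, c4, c5) := c in
  match e with e1 => c1 | e2 => c2 | e3 => c3 | e4 => c4 | e5 => c5 end.

(* Parametrisations of the walk classes meeting each edge: [j] counts the traversals
   of that edge, and [n] lists the halved counts of the other edges that are used. *)
Definition param_e1_jumper (j : nat) (n : list nat) : vec5 :=
  (j, 2 * nth 0 n 0, 2 * nth 1 n 0 + 2, 2 * nth 2 n 0, 2 * nth 3 n 0)%nat.
Definition param_e1_local (j : nat) (n : list nat) : vec5 := (j, 2 * nth 0 n 0, 0, 0, 0)%nat.
Definition param_e2_jumper (j : nat) (n : list nat) : vec5 :=
  (2 * nth 0 n 0, j, 2 * nth 1 n 0 + 2, 2 * nth 2 n 0, 2 * nth 3 n 0)%nat.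
Definition param_e2_local (j : nat) (n : list nat) : vec5 := (2 * nth 0 n 0, j, 0, 0, 0)%nat.
Definition param_e3_e4 (j : nat) (n : list nat) : vec5 :=
  (2 * nth 0 n 0, 2 * nth 1 n 0, S j, 2 * nth 2 n 0 + 2, 2 * nth 3 n 0)%nat.
Definition param_e3_e5 (j : nat) (n : list nat) : vec5 :=
  (2 * nth 0 n 0, 2 * nth 1 n 0, S j, 0, 2 * nth 2 n 0 + 2)%nat.
Definition param_e3_local (j : nat) (n : list nat) : vec5 :=
  (2 * nth 0 n 0, 2 * nth 1 n 0, j, 0, 0)%nat.
Definition param_e4 (j : nat) (n : list nat) : vec5 :=
  (2 * nth 0 n 0, 2 * nth 1 n 0, 2 * nth 2 n 0 + 1, j, 2 * nth 3 n 0)%nat.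
Definition param_e5 (j : nat) (n : list nat) : vec5 :=
  (2 * nth 0 n 0, 2 * nth 1 n 0, 2 * nth 2 n 0 + 1, 2 * nth 3 n 0, j)%nat.

Ltac unfold_params := cbv beta delta [param_e1_jumper param_e1_local param_e2_jumper
  param_e2_local param_e3_e4 param_e3_e5 param_e3_local param_e4 param_e5].

Ltac walk_class_backward :=
  intros [j [n [_ [= -> -> -> -> ->]]]]; destruct (Nat.eq_dec (j mod 2) 0);
  first [left; cbn [walk_class parity_class]; plia | right; cbn [walk_class parity_class]; plia].

Ltac walk_class_witness j n :=
  exists j, n; split; [reflexivity|unfold_params; cbn [nth]; repeat f_equal; plia].

Lemma walk_class_e1 c : walk_class vA c \/ walk_class vL1 c <->
  (exists j n, length n = 4%nat /\ c = param_e1_jumper j n) \/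
  (exists j n, length n = 1%nat /\ c = param_e1_local j n).
Proof.
  destruct c as [[[[c1 c2] c3] c4] c5]. split; [|intros [H|H]; revert H; walk_class_backward].
  intros H.
  assert (c2 mod 2 = 0 /\ c3 mod 2 = 0 /\ c4 mod 2 = 0 /\ c5 mod 2 = 0 /\ (0 < c4 + c5 -> 0 < c3))%nat
    by (destruct H as [H|H]; cbn [walk_class parity_class] in H; plia).
  destruct (Nat.eq_dec c3 0); [right; walk_class_witness c1 [c2 / 2]%nat
                              |left; walk_class_witness c1 [c2 / 2; c3 / 2 - 1; c4 / 2; c5 / 2]%nat].
Qed.

Lemma walk_class_e2 c : walk_class vA c \/ walk_class vL2 c <->
  (exists j n, length n = 4%nat /\ c = param_e2_jumper j n) \/
  (exists j n, length n = 1%nat /\ c = param_e2_local j n).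
Proof.
  destruct c as [[[[c1 c2] c3] c4] c5]. split; [|intros [H|H]; revert H; walk_class_backward].
  intros H.
  assert (c1 mod 2 = 0 /\ c3 mod 2 = 0 /\ c4 mod 2 = 0 /\ c5 mod 2 = 0 /\ (0 < c4 + c5 -> 0 < c3))%nat
    by (destruct H as [H|H]; cbn [walk_class parity_class] in H; plia).
  destruct (Nat.eq_dec c3 0); [right; walk_class_witness c2 [c1 / 2]%nat
                              |left; walk_class_witness c2 [c1 / 2; c3 / 2 - 1; c4 / 2; c5 / 2]%nat].
Qed.

Lemma walk_class_e3 c : walk_class vA c \/ walk_class vB c <->
  (exists j n, length n = 4%nat /\ c = param_e3_e4 j n) \/
  (exists j n, length n = 3%nat /\ c = param_e3_e5 j n) \/
  (exists j n, length n = 2%nat /\ c = param_e3_local j n).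
Proof.
  destruct c as [[[[c1 c2] c3] c4] c5].
  split; [|intros [H|[H|H]]; revert H; walk_class_backward].
  intros H.
  assert (c1 mod 2 = 0 /\ c2 mod 2 = 0 /\ c4 mod 2 = 0 /\ c5 mod 2 = 0 /\ (0 < c4 + c5 -> 0 < c3))%nat
    by (destruct H as [H|H]; cbn [walk_class parity_class] in H; plia).
  destruct (Nat.eq_dec c4 0); [destruct (Nat.eq_dec c5 0)|].
  - right; right; walk_class_witness c3 [c1 / 2; c2 / 2]%nat.
  - right; left; walk_class_witness (c3 - 1)%nat [c1 / 2; c2 / 2; c5 / 2 - 1]%nat.
  - left; walk_class_witness (c3 - 1)%nat [c1 / 2; c2 / 2; c4 / 2 - 1; c5 / 2]%nat.
Qed.

Lemma walk_class_e4 c : walk_class vB c \/ walk_class vL4 c <->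
  exists j n, length n = 4%nat /\ c = param_e4 j n.
Proof.
  destruct c as [[[[c1 c2] c3] c4] c5]. split; [|walk_class_backward].
  intros H. assert (c1 mod 2 = 0 /\ c2 mod 2 = 0 /\ c3 mod 2 = 1 /\ c5 mod 2 = 0)%nat
    by (destruct H as [H|H]; cbn [walk_class parity_class] in H; plia).
  walk_class_witness c4 [c1 / 2; c2 / 2; c3 / 2; c5 / 2]%nat.
Qed.

Lemma walk_class_e5 c : walk_class vB c \/ walk_class vL5 c <->
  exists j n, length n = 4%nat /\ c = param_e5 j n.
Proof.
  destruct c as [[[[c1 c2] c3] c4] c5]. split; [|walk_class_backward].
  intros H. assert (c1 mod 2 = 0 /\ c2 mod 2 = 0 /\ c3 mod 2 = 1 /\ c4 mod 2 = 0)%nat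
    by (destruct H as [H|H]; cbn [walk_class parity_class] in H; plia).
  walk_class_witness c5 [c1 / 2; c2 / 2; c3 / 2; c4 / 2]%nat.
Qed.

Definition count_H (t1 t2 t3 t4 t5 T : R) : nat :=
  (lattice_count [2 * t2; 2 * t3; 2 * t4; 2 * t5] (T - 2 * t3) + lattice_count [2 * t2] (T - 0)) +
  ((lattice_count [2 * t1; 2 * t3; 2 * t4; 2 * t5] (T - 2 * t3) + lattice_count [2 * t1] (T - 0)) +
  ((lattice_count [2 * t1; 2 * t2; 2 * t4; 2 * t5] (T - (t3 + 2 * t4)) +
    (lattice_count [2 * t1; 2 * t2; 2 * t5] (T - (t3 + 2 * t5)) + lattice_count [2 * t1; 2 * t2] (T - 0))) +
  (lattice_count [2 * t1; 2 * t2; 2 * t3; 2 * t5] (T - t3) +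
   lattice_count [2 * t1; 2 * t2; 2 * t3; 2 * t4] (T - t3)))).

Section CountH.
Variables t1 t2 t3 t4 t5 : R.
Hypotheses (h1 : 0 < t1) (h2 : 0 < t2) (h3 : 0 < t3) (h4 : 0 < t4) (h5 : 0 < t5).
Hypothesis time_inj :
  forall c c', walk_time t1 t2 t3 t4 t5 c = walk_time t1 t2 t3 t4 t5 c' -> c = c'.

Let len := tlen t1 t2 t3 t4 t5.
Let time := walk_time t1 t2 t3 t4 t5.

Definition moving_on_edge (T : R) (e : hedge) (x : hvert * R * hedge) : Prop :=
  let '(v, s, e') := x in e' = e /\ departs hvert hedge endsH len vA v s e' /\ s <= T < s + len e'.

Lemma moving_on_edge_card T e a b n :
  endsH e = (a, b) ->
  (forall c, walk_class a c -> coord e c mod 2 = 0)%nat ->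
  (forall c, walk_class b c -> coord e c mod 2 = 1)%nat ->
  has_card (fun c => (walk_class a c \/ walk_class b c) /\ T - len e < time c <= T) n ->
  has_card (moving_on_edge T e) n.
Proof.
  intros Hab Ha Hb.
  (* the parity of the traversals of [e] tells from which end the point departed *)
  set (side := fun c => if (coord e c mod 2 =? 0)%nat then a else b).
  assert (side_a : forall c, walk_class a c -> side c = a)
    by (intros c Hc; unfold side; now rewrite Ha).
  assert (side_b : forall c, walk_class b c -> side c = b)
    by (intros c Hc; unfold side; now rewrite Hb).
  assert (Hinc : forall v, incident hvert hedge endsH v e <-> v = a \/ v = b)
    by (intros v; unfold incident; rewrite Hab; simpl; intuition congruence).
  apply (has_card_image _ _ (fun c => (side c, time c, e))).
  - intros c [HW Hw]. repeat split; try lra. apply departs_H_iff.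
    destruct HW as [HW|HW]; [rewrite side_a|rewrite side_b]; auto;
      split; try (apply Hinc; auto); exists c; auto.
  - intros c c' _ _ E. injection E; intros. now apply time_inj.
  - intros [[v s] e'] [-> [Hd Hw]]. apply departs_H_iff in Hd as [Hi [c [HW ->]]].
    exists c. unfold time. apply Hinc in Hi as [->| ->].
    + rewrite side_a by auto. repeat split; auto; lra.
    + rewrite side_b by auto. repeat split; auto; lra.
Qed.

Ltac window_premises :=
  first
  [ solve [unfold len; cbn [tlen]; lra]
  | solve [repeat constructor; lra]
  | intros j n Hn; destruct n as [|? [|? [|? [|? [|]]]]]; try discriminate;
    first
    [ solve [unfold_params; cbn [nth]; repeat f_equal; plia]
    | solve [unfold time, len; unfold_params; cbn [nth walk_time tlen lin_comb];
             rewrite ?S_INR, ?plus_INR, ?mult_INR; simpl INR; ring] ] ].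

Ltac params_disjoint :=
  intros c [[j [n [_ ->]]] _] [[j' [n' [_ E]]] _]; unfold_params; injection E; lia.

Ltac coord_parity := intros [[[[c1 c2] c3] c4] c5] H; cbn [walk_class parity_class coord] in *; plia.

Lemma moving_on_e1_card T : has_card (moving_on_edge T e1)
  (lattice_count [2 * t2; 2 * t3; 2 * t4; 2 * t5] (T - 2 * t3) + lattice_count [2 * t2] (T - 0)).
Proof.
  apply (moving_on_edge_card T e1 vA vL1); [reflexivity|coord_parity|coord_parity|].
  eapply has_card_split.
  - apply (window_card param_e1_jumper
      (fun c => let '(_, c2, c3, c4, c5) := c in [c2 / 2; c3 / 2 - 1; c4 / 2; c5 / 2]%nat)
      time _ (len e1) (2 * t3) T); window_premises.
  - apply (window_card param_e1_local (fun c => let '(_, c2, _, _, _) := c in [c2 / 2]%nat)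
      time _ (len e1) 0 T); window_premises.
  - params_disjoint.
  - intros c. rewrite walk_class_e1. tauto.
Qed.

Lemma moving_on_e2_card T : has_card (moving_on_edge T e2)
  (lattice_count [2 * t1; 2 * t3; 2 * t4; 2 * t5] (T - 2 * t3) + lattice_count [2 * t1] (T - 0)).
Proof.
  apply (moving_on_edge_card T e2 vA vL2); [reflexivity|coord_parity|coord_parity|].
  eapply has_card_split.
  - apply (window_card param_e2_jumper
      (fun c => let '(c1, _, c3, c4, c5) := c in [c1 / 2; c3 / 2 - 1; c4 / 2; c5 / 2]%nat)
      time _ (len e2) (2 * t3) T); window_premises.
  - apply (window_card param_e2_local (fun c => let '(c1, _, _, _, _) := c in [c1 / 2]%nat)
      time _ (len e2) 0 T); window_premises.
  - params_disjoint.
  - intros c. rewrite walk_class_e2. tauto.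
Qed.

Lemma moving_on_e3_card T : has_card (moving_on_edge T e3)
  (lattice_count [2 * t1; 2 * t2; 2 * t4; 2 * t5] (T - (t3 + 2 * t4)) +
   (lattice_count [2 * t1; 2 * t2; 2 * t5] (T - (t3 + 2 * t5)) + lattice_count [2 * t1; 2 * t2] (T - 0))).
Proof.
  apply (moving_on_edge_card T e3 vA vB); [reflexivity|coord_parity|coord_parity|].
  eapply has_card_split; [|eapply has_card_or| |].
  - apply (window_card param_e3_e4
      (fun c => let '(c1, c2, _, c4, c5) := c in [c1 / 2; c2 / 2; c4 / 2 - 1; c5 / 2]%nat)
      time _ (len e3) (t3 + 2 * t4) T); window_premises.
  - apply (window_card param_e3_e5
      (fun c => let '(c1, c2, _, _, c5) := c in [c1 / 2; c2 / 2; c5 / 2 - 1]%nat)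
      time _ (len e3) (t3 + 2 * t5) T); window_premises.
  - apply (window_card param_e3_local (fun c => let '(c1, c2, _, _, _) := c in [c1 / 2; c2 / 2]%nat)
      time _ (len e3) 0 T); window_premises.
  - params_disjoint.
  - intros x H [H'|H']; revert x H H'; params_disjoint.
  - intros c. rewrite walk_class_e3. tauto.
Qed.

Lemma moving_on_e4_card T : has_card (moving_on_edge T e4)
  (lattice_count [2 * t1; 2 * t2; 2 * t3; 2 * t5] (T - t3)).
Proof.
  apply (moving_on_edge_card T e4 vB vL4); [reflexivity|coord_parity|coord_parity|].
  eapply has_card_ext.
  2: apply (window_card param_e4
       (fun c => let '(c1, c2, c3, _, c5) := c in [c1 / 2; c2 / 2; c3 / 2; c5 / 2]%nat)
       time _ (len e4) t3 T); window_premises.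
  intros c. rewrite walk_class_e4. tauto.
Qed.

Lemma moving_on_e5_card T : has_card (moving_on_edge T e5)
  (lattice_count [2 * t1; 2 * t2; 2 * t3; 2 * t4] (T - t3)).
Proof.
  apply (moving_on_edge_card T e5 vB vL5); [reflexivity|coord_parity|coord_parity|].
  eapply has_card_ext.
  2: apply (window_card param_e5
       (fun c => let '(c1, c2, c3, c4, _) := c in [c1 / 2; c2 / 2; c3 / 2; c4 / 2]%nat)
       time _ (len e5) t3 T); window_premises.
  intros c. rewrite walk_class_e5. tauto.
Qed.

Lemma moving_H_card T : has_card (moving endsH len vA T) (count_H t1 t2 t3 t4 t5 T).
Proof.
  unfold count_H. eapply has_card_split;
    [apply moving_on_e1_card
    |eapply has_card_or; [apply moving_on_e2_card|eapply has_card_or;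
      [apply moving_on_e3_card|eapply has_card_or; [apply moving_on_e4_card|apply moving_on_e5_card|]|]|]
    |..];
    try (intros [[v s] e] [-> _] H; unfold moving_on_edge in H; intuition discriminate).
  intros [[v s] e]. unfold moving, moving_on_edge. destruct e; intuition discriminate.
Qed.

End CountH.

Lemma Npoints_H_count t1 t2 t3 t4 t5 T :
  0 < t1 -> 0 < t2 -> 0 < t3 -> 0 < t4 -> 0 < t5 ->
  (forall c c', walk_time t1 t2 t3 t4 t5 c = walk_time t1 t2 t3 t4 t5 c' -> c = c') ->
  Npoints hvert hedge endsH (tlen t1 t2 t3 t4 t5) vA T = count_H t1 t2 t3 t4 t5 T.
Proof. intros. rewrite Npoints_moving. now apply fin_card_has_card, moving_H_card. Qed.

(** * Exchanging e1 and e5 *)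

Lemma departs_relabel {V E : Type} (ends ends' : E -> V * V) (len len' : E -> R)
    (phi : V -> V) (psi : E -> E) (a : V) :
  (forall e, ends' (psi e) = (phi (fst (ends e)), phi (snd (ends e)))) ->
  (forall e, len' (psi e) = len e) ->
  forall v s e, departs V E ends len a v s e -> departs V E ends' len' (phi a) (phi v) s (psi e).
Proof.
  intros Hends Hlen.
  assert (Hinc : forall v e, incident V E ends v e -> incident V E ends' (phi v) (psi e))
    by (unfold incident; intros v e; rewrite Hends; simpl; intros [<-|<-]; auto).
  induction 1 as [e He|v s e w e' Hd IH [Hj|Hj] Hwe'].
  - now apply dep_start, Hinc.
  - rewrite <- Hlen. apply dep_next with (phi v); auto. left. now rewrite Hends, Hj.
  - rewrite <- Hlen. apply dep_next with (phi v); auto. right. now rewrite Hends, Hj.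
Qed.

Definition swap_leaves (v : hvert) : hvert := match v with vL1 => vL5 | vL5 => vL1 | w => w end.
Definition swap_e1_e5 (e : hedge) : hedge := match e with e1 => e5 | e5 => e1 | f => f end.

Lemma Npoints_H'_count t1 t2 t3 t4 t5 T :
  0 < t1 -> 0 < t2 -> 0 < t3 -> 0 < t4 -> 0 < t5 ->
  (forall c c', walk_time t5 t2 t3 t4 t1 c = walk_time t5 t2 t3 t4 t1 c' -> c = c') ->
  Npoints hvert hedge endsH' (tlen t1 t2 t3 t4 t5) vA T = count_H t5 t2 t3 t4 t1 T.
Proof.
  intros h1 h2 h3 h4 h5 Hinj. rewrite Npoints_moving. apply fin_card_has_card.
  set (relabel := fun x : hvert * R * hedge => let '(v, s, e) := x in (swap_leaves v, s, swap_e1_e5 e)).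
  assert (relabel_inv : forall x, relabel (relabel x) = x) by (intros [[[] s] []]; reflexivity).
  assert (Hfwd := departs_relabel endsH' endsH (tlen t1 t2 t3 t4 t5) (tlen t5 t2 t3 t4 t1)
                    swap_leaves swap_e1_e5 vA ltac:(intros []; reflexivity) ltac:(intros []; reflexivity)).
  assert (Hbwd := departs_relabel endsH endsH' (tlen t5 t2 t3 t4 t1) (tlen t1 t2 t3 t4 t5)
                    swap_leaves swap_e1_e5 vA ltac:(intros []; reflexivity) ltac:(intros []; reflexivity)).
  apply (has_card_preimage _ (moving endsH (tlen t5 t2 t3 t4 t1) vA T) relabel).
  - intros [[v s] e] [Hd Hw]. split; [now apply Hfwd|now destruct e].
  - intros x y _ _ E. now rewrite <- (relabel_inv x), E, relabel_inv.
  - intros y Hy. exists (relabel y). rewrite relabel_inv. split; auto.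
    destruct y as [[v s] e], Hy as [Hd Hw]. split; [now apply Hbwd|now destruct e].
  - now apply moving_H_card.
Qed.

(** * The difference of the two counts *)

Ltac split_at x r :=
  match r with
  | x :: ?l2 => constr:((@nil R, l2))
  | ?y :: ?rest => let p := split_at x rest in
                   match p with (?a, ?b) => constr:((y :: a, b)) end
  end.

Ltac perm_solve :=
  match goal with
  | |- Permutation [] [] => apply perm_nil
  | |- Permutation (?x :: ?l) ?r =>
      let p := split_at x r in
      match p with (?l1, ?l2) =>
        apply perm_trans with (x :: l1 ++ l2); [apply perm_skip; simpl; perm_solve | apply Permutation_middle]
      end
  end.

Ltac rewrite_perm s s' :=
  rewrite !(lattice_count_perm s s') by (perm_solve || (repeat constructor; lra)).

Ltac little_o3_term :=
  first
  [ apply little_o3_scale; little_o3_term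
  | eapply little_o3_lattice_second_difference; [lra|repeat constructor; lra|eassumption|lra]
  | apply big_O2_little_o3, big_O2_lattice_count_cubic_defect; [repeat constructor; lra|lra|reflexivity]
  | apply big_O2_little_o3, big_O2_lattice_count_low_dim; [repeat constructor; lra|lra|simpl; lia] ].

Lemma count_H_difference_asymp t1 t2 t3 t4 t5 P2345 R2345 P1234 R1234 :
  0 < t1 -> 0 < t2 -> 0 < t3 -> 0 < t4 -> 0 < t5 ->
  asymp_4_3 (fun Y => INR (lattice_count [t2; t3; t4; t5] Y)) P2345 R2345 ->
  asymp_4_3 (fun Y => INR (lattice_count [t1; t2; t3; t4] Y)) P1234 R1234 ->
  asymp_3 (fun T => INR (count_H t1 t2 t3 t4 t5 T) - INR (count_H t5 t2 t3 t4 t1 T))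
    (- (1 / (96 * t2 * t4)) * (1 / t5 - 1 / t1)).
Proof.
  intros h1 h2 h3 h4 h5 Hasymp2345 Hasymp1234.
  set (sd := fun l T => INR (lattice_count (map (fun a => 2 * a) l) T)
                        - 2 * INR (lattice_count (map (fun a => 2 * a) l) (T - t3))
                        + INR (lattice_count (map (fun a => 2 * a) l) (T - 2 * t3))).
  set (defect := fun s a T => INR (lattice_count s (T - a)) - T ^ 3 / simplex_denom s).
  apply little_o3_ext with (fun T =>
      / 2 * sd [t2; t3; t4; t5] T + (- / 2) * sd [t1; t2; t3; t4] T
    + (- / 2) * defect [2 * t2; 2 * t4; 2 * t5] 0 T + / 2 * defect [2 * t1; 2 * t2; 2 * t4] 0 T
    + defect [2 * t1; 2 * t2; 2 * t5] (t3 + 2 * t5) T + (-1) * defect [2 * t5; 2 * t2; 2 * t1] (t3 + 2 * t1) T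
    + INR (lattice_count [2 * t1] (T - 0)) + (-1) * INR (lattice_count [2 * t5] (T - 0))
    + INR (lattice_count [2 * t1; 2 * t2] (T - 0)) + (-1) * INR (lattice_count [2 * t5; 2 * t2] (T - 0))).
  - (* bring the surviving four-dimensional counts to the form [2 * t3 :: r], and the
       remaining ones to a common order so that they cancel *)
    intros T. unfold sd, defect, count_H. cbn [map].
    rewrite_perm [2 * t2; 2 * t3; 2 * t4; 2 * t5] [2 * t3; 2 * t2; 2 * t4; 2 * t5].
    rewrite_perm [2 * t5; 2 * t2; 2 * t3; 2 * t4] [2 * t3; 2 * t2; 2 * t4; 2 * t5].
    rewrite_perm [2 * t1; 2 * t2; 2 * t3; 2 * t4] [2 * t3; 2 * t1; 2 * t2; 2 * t4].
    rewrite_perm [2 * t2; 2 * t3; 2 * t4; 2 * t1] [2 * t3; 2 * t1; 2 * t2; 2 * t4].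
    rewrite_perm [2 * t5; 2 * t3; 2 * t4; 2 * t1] [2 * t1; 2 * t3; 2 * t4; 2 * t5].
    rewrite_perm [2 * t5; 2 * t2; 2 * t4; 2 * t1] [2 * t1; 2 * t2; 2 * t4; 2 * t5].
    rewrite_perm [2 * t5; 2 * t2; 2 * t3; 2 * t1] [2 * t1; 2 * t2; 2 * t3; 2 * t5].
    rewrite (lattice_count_cons (2 * t3) [2 * t2; 2 * t4; 2 * t5] T),
            (lattice_count_cons (2 * t3) [2 * t1; 2 * t2; 2 * t4] T) by (repeat constructor; lra).
    rewrite !plus_INR, !Rminus_0_r. unfold simplex_denom. cbn [length fact prodR fold_right].
    simpl INR. field. repeat split; lra.
  - repeat (apply little_o3_plus; [|little_o3_term]). little_o3_term.
Qed.

Theorem mainTheorem5 (t1 t2 t3 t4 t5 : R) :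
  0 < t1 -> 0 < t2 -> 0 < t3 -> 0 < t4 -> 0 < t5 ->
  Assumption1 t1 t2 t3 t4 t5 ->
  asymp_3
    (fun T => INR (Npoints hvert hedge endsH (tlen t1 t2 t3 t4 t5) vA T)
            - INR (Npoints hvert hedge endsH' (tlen t1 t2 t3 t4 t5) vA T))
    (- (1 / (96 * t2 * t4)) * (1 / t5 - 1 / t1)).
Proof.
  intros h1 h2 h3 h4 h5 [Hindep Hasymp].
  destruct (Hasymp [1; 2; 3; 4]%nat) as [P2345 [R2345 H2345]];
    [repeat constructor; simpl; intuition lia|simpl; lia|simpl; intuition lia|].
  destruct (Hasymp [0; 1; 2; 3]%nat) as [P1234 [R1234 H1234]];
    [repeat constructor; simpl; intuition lia|simpl; lia|simpl; intuition lia|].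
  eapply little_o3_ext; [|exact (count_H_difference_asymp t1 t2 t3 t4 t5
                                    P2345 R2345 P1234 R1234 h1 h2 h3 h4 h5 H2345 H1234)].
  intros T. rewrite Npoints_H_count, Npoints_H'_count; auto.
  - now apply walk_time_inj, Q_independent_swap15.
  - now apply walk_time_inj.
Qed.
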